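(* Consider the online adaptive minimum-weight basis problem with uniform query costs, where in addition the algorithm is given a predicted basis $\hat{B}$ of $M$. There is an algorithm that queries a set $Q$ which is a certificate verifying some minimum-weight basis of $\mathcal{M}$ and satisfies $$|Q|\le \min\{\,2\,(|Q^*|+\eta_1)+\eta_2\cdot c_{\max},\ n\,\},$$ where $Q^*$ is a minimum-cardinality certificate for $\mathcal{M}$, $n=|E|$, and $c_{\max}$ is the size of the largest circuit of $M$. In particular, the algorithm is $2$-consistent and $n$-robust.
   Context: A weighted uncertainty matroid $\mathcal{M}=(E,\mathcal{I},A,w)$ consists of a matroid $M=(E,\mathcal{I})$ on a finite ground set $E$, for each $e\in E$ an uncertainty area $A_e\subseteq\mathbb{R}$ that is a non-empty finite union of bounded real intervals (open or closed), and a weight $w_e\in A_e$. A minimum-weight basis (MWB) is a basis of $M$ minimizing total weight. A weight assignment is $w^*:E\to\mathbb{R}$ with $w^*_e\in A_e$; it is consistent with $Q\subseteq E$ if $w^*_e=w_e$ for $e\in Q$. A set $Q$ verifies an MWB $B$ (is a certificate for $B$) if for every weight assignment consistent with $Q$, $B$ is an MWB with respect to it; a certificate for $\mathcal{M}$ is a set verifying some MWB; with uniform costs, a minimum-cardinality certificate is a certificate of minimum size. The verification cost of an MWB $B$ is the minimum size of a certificate verifying $B$. $\mathrm{span}_M(X)=\{e\in E: r(X\cup\{e\})=r(X)\}$ where $r$ is the rank function. Online adaptive problem: the algorithm knows $M$ (via an independence oracle) and the areas $A_e$ but not the weights; querying $e$ reveals $w_e$ at unit cost; it adaptively queries elements until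 the queried set $Q$ is a certificate for $\mathcal{M}$. An algorithm is $\rho$-competitive if $|Q|\le\rho\cdot|Q^*|$ on every instance. Here the algorithm also receives a predicted basis $\hat B$ of $M$; it is $\alpha$-consistent if it is $\alpha$-competitive whenever the prediction is correct (i.e., $\hat B$ is an MWB that can be verified by a minimum-cardinality certificate of $\mathcal{M}$), and $\beta$-robust if it is $\beta$-competitive for arbitrary predictions. Errors: for $e\in E\setminus\hat B$ let $C_e$ be the fundamental circuit of $e$ with respect to $\hat B$ (the unique circuit in $\hat B\cup\{e\}$). $C_e$ is correct if $w_e\ge w_f$ for all $f\in C_e\setminus\{e\}$ and $w_f\le w_g$ for all $f\in C_e\setminus\{e\}$ and all $g\in E\setminus\mathrm{span}_M(\hat B\setminus\{f\})$; otherwise incorrect. Let $\hat B_s\subseteq\hat B$ be the set of elements of $\hat B$ lying in some correct circuit $C_e$, $e\in E\setminus\hat B$. Let $\hat B_s^*$ be an MWB containing $\hat B_s$ of minimum verification cost among all MWBs containing $\hat B_s$, and let $Q'$ be a minimum-cardinality certificate verifying $\hat B_s^*$. Define $\eta_1=|Q'|-|Q^*|$ and $\eta_2$ as the number of incorrect circuits $C_e$, $e\in E\setminus\hat B$. *)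

From HB Require Import structures.
From mathcomp Require Import all_boot all_order all_algebra.
From mathcomp Require Import reals.
Set Implicit Arguments. Unset Strict Implicit. Unset Printing Implicit Defensive.
Import Order.TTheory GRing.Theory Num.Theory.
Local Open Scope ring_scope.

Record matroid (E : finType) := Matroid {
  indep : {set E} -> bool;
  indep0 : indep set0;
  indep_sub : forall A B : {set E}, B \subset A -> indep A -> indep B;
  indep_exchange : forall A B : {set E}, indep A -> indep B -> (#|A| < #|B|)%N ->
      exists2 x, x \in B :\: A & indep (x |: A) }.

Section Matroid.
Variables (E : finType) (M : matroid E).

Definition is_basis (B : {set E}) : bool :=
  indep M B && [forall e, indep M (e |: B) ==> (e \in B)].

Definition circuit (C : {set E}) : bool :=
  ~~ indep M C && [forall D : {set E}, (D \proper C) ==> indep M D].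

Definition rank (X : {set E}) : nat :=
  \max_(Y : {set E} | (Y \subset X) && indep M Y) #|Y|.

Definition span (X : {set E}) : {set E} :=
  [set e | rank (e |: X) == rank X].

(* size of the largest circuit (0 if there is none) *)
Definition cmax : nat := \max_(C : {set E} | circuit C) #|C|.

(* C is the fundamental circuit of e w.r.t. B: the (unique) circuit in B + e *)
Definition fund_circuit (B : {set E}) (e : E) (C : {set E}) : bool :=
  circuit C && (C \subset e |: B).
End Matroid.

Section Uncertainty.
Variable R : realType.

Definition bounded_itv (I : interval R) : bool :=
  match I with
  | Interval (BSide _ _) (BSide _ _) => true
  | _ => false
  end.

(* an uncertainty area is given by a finite list of bounded intervals;
   x lies in the area iff it lies in one of them *)
Definition in_area (A : seq (interval R)) (x : R) : bool :=
  has (fun I => x \in I) A.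

Variables (E : finType) (M : matroid E) (A : E -> seq (interval R)).

Definition weight (w : E -> R) (B : {set E}) : R := \sum_(e in B) w e.

Definition is_MWB (w : E -> R) (B : {set E}) : Prop :=
  is_basis M B /\ forall B', is_basis M B' -> weight w B <= weight w B'.

Definition consistent (w : E -> R) (Q : {set E}) (w' : E -> R) : Prop :=
  (forall e, in_area (A e) (w' e)) /\ (forall e, e \in Q -> w' e = w e).

Definition verifies (w : E -> R) (Q B : {set E}) : Prop :=
  forall w', consistent w Q w' -> is_MWB w' B.

Definition certificate (w : E -> R) (Q : {set E}) : Prop :=
  exists B, verifies w Q B.

Definition min_certificate (w : E -> R) (Q : {set E}) : Prop :=
  certificate w Q /\ forall Q', certificate w Q' -> (#|Q| <= #|Q'|)%N.

Definition correct_circ (w : E -> R) (Bh : {set E}) (e : E) (C : {set E}) : bool :=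
  [forall f in C :\ e, w f <= w e] &&
  [forall f in C :\ e, forall g in ~: span M (Bh :\ f), w f <= w g].

Definition circ_correct (w : E -> R) (Bh : {set E}) (e : E) : bool :=
  [exists C : {set E}, fund_circuit M Bh e C && correct_circ w Bh e C].

Definition Bhat_s (w : E -> R) (Bh : {set E}) : {set E} :=
  [set f in Bh | [exists e, (e \notin Bh) &&
      [exists C : {set E}, [&& fund_circuit M Bh e C, correct_circ w Bh e C
                               & f \in C]]]].

Definition eta2 (w : E -> R) (Bh : {set E}) : nat :=
  #|[set e | (e \notin Bh) && ~~ circ_correct w Bh e]|.

(* Bs is an MWB containing \hat B_s of minimum verification cost among all
   such MWBs, and Q' is a minimum-cardinality certificate verifying Bs *)
Definition opt_Bs_cert (w : E -> R) (Bh Bs Q' : {set E}) : Prop :=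
  [/\ is_MWB w Bs, Bhat_s w Bh \subset Bs, verifies w Q' Bs,
      (forall Q, verifies w Q Bs -> (#|Q'| <= #|Q|)%N) &
      (forall B' Q, is_MWB w B' -> Bhat_s w Bh \subset B' -> verifies w Q B' ->
         exists2 Q'', verifies w Q'' Bs & (#|Q''| <= #|Q|)%N)].

Definition eta1 (Qstar Q' : {set E}) : nat := (#|Q'| - #|Qstar|)%N.

(* A strategy maps the history (queried elements with revealed weights) to
   the next element to query, or None to stop. *)
Fixpoint history (strat : seq (E * R) -> option E) (w : E -> R) (k : nat)
  : seq (E * R) :=
  match k with
  | 0 => [::]
  | k'.+1 => let h := history strat w k' in
             match strat h with
             | Some e => rcons h (e, w e)
             | None => h
             end
  end.

Definition queried (h : seq (E * R)) : {set E} := [set e | e \in map fst h].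
End Uncertainty.

From Pilot Require Import Defs.
From HB Require Import structures.
From mathcomp Require Import all_boot all_order all_algebra.
From mathcomp Require Import reals boolp zify.
Set Implicit Arguments. Unset Strict Implicit. Unset Printing Implicit Defensive.
Import Order.TTheory GRing.Theory Num.Theory.

(* The strategy only makes forced queries along the fundamental circuits
   [C_e] of the predicted basis [Bh]: an element of a circuit already refuted by
   the revealed weights, or both ends of a pair [e], [f] in [C_e] whose order
   may still be [e < f] (first [e], then [f]).  When nothing is forced, every
   unrefuted [f] in [Bh] is at most as heavy as its whole fundamental cocircuit
   under every consistent assignment, so exchanges turn any basis into one
   containing the unrefuted elements without increasing its weight; the other
   elements of such bases are queried, hence a lightest of them is a minimum
   basis for every consistent assignment.
   Charging: queries inside incorrect circuits cost at most [eta2 * cmax].  For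
   a forced pair in a correct circuit [C_e], [C_e - e] lies in [Bs]; if neither
   [e] nor [f] were an unqueried element of [Q'], the conflict could be
   realised consistently with [Q'] with [f] heavier than [e], and [Bs] would
   not be minimum.  So every two such queries meet [Q'] afresh, and
   [|Q| <= 2 |Q'| + eta2 cmax] with [|Q'| = |Q*| + eta1]. *)

Section MatroidFacts.
Variables (E : finType) (M : matroid E).
Implicit Types (B C D I J K S X Y : {set E}) (e f g x y : E).

Lemma indep_extend_maximum I X : indep M I -> I \subset X ->
  exists J, [/\ indep M J, I \subset J, J \subset X &
    forall K, K \subset X -> indep M K -> #|K| <= #|J|].
Proof.
move=> HI IX.
pose P J := [&& indep M J, I \subset J & J \subset X].
have P0 : P I by rewrite /P HI subxx IX.
case: (arg_maxnP (fun J : {set E} => #|J|) P0) => J /and3P [HJ IJ JX] Jmax.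
exists J; split=> // K KX HK; rewrite leqNgt; apply/negP=> ltJK.
have [x /setDP [xK xJ] HxJ] := indep_exchange HJ HK ltJK.
have xJX : x |: J \subset X by rewrite subUset sub1set (subsetP KX) ?JX.
have := Jmax (x |: J); rewrite /P HxJ xJX (subset_trans IJ (subsetUr _ _)) cardsU1 xJ.
by move=> /(_ isT) /=; rewrite add1n ltnn.
Qed.

Lemma basis_indep B : is_basis M B -> indep M B.
Proof. by case/andP. Qed.

Lemma basis_maximal B e : is_basis M B -> indep M (e |: B) -> e \in B.
Proof. by case/andP=> _ /forallP /(_ e) /implyP. Qed.

Lemma indep_basis_card B J : is_basis M B -> indep M J -> #|B| <= #|J| ->
  is_basis M J.
Proof.
move=> HB HJ leBJ; rewrite /is_basis HJ; apply/forallP=> e; apply/implyP=> HeJ.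
apply/negPn/negP=> eJ.
have ltBeJ : #|B| < #|e |: J| by rewrite cardsU1 eJ.
have [y /setDP [_ yB] HyB] := indep_exchange (basis_indep HB) HeJ ltBeJ.
by rewrite (basis_maximal HB HyB) in yB.
Qed.

Lemma circuit_dep C : circuit M C -> ~~ indep M C.
Proof. by case/andP. Qed.

Lemma circuit_proper_indep C D : circuit M C -> D \proper C -> indep M D.
Proof. by case/andP=> _ /forallP /(_ D) /implyP. Qed.

Lemma circuit_subU1 B C x : indep M B -> circuit M C -> C \subset x |: B ->
  (x \in C) && (x \notin B).
Proof.
move=> HB HC CxB.
have CB : (x \notin C) || (x \in B) -> C \subset B.
  move=> HxCB; apply/subsetP=> z zC; move: (subsetP CxB z zC); rewrite in_setU1.
  by case/orP=> // /eqP zx; move: HxCB; rewrite -zx zC.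
apply/andP; split; [apply/negPn/negP=> xC | apply/negP=> xB];
  by case/negP: (circuit_dep HC); apply/(indep_sub _ HB)/CB; rewrite ?xC ?xB ?orbT.
Qed.

Lemma fund_circuit_mem B e C : indep M B -> fund_circuit M B e C -> e \in C.
Proof. by move=> HB /andP [HC CeB]; case/andP: (circuit_subU1 HB HC CeB). Qed.

Lemma fund_circuit_notin B e C : indep M B -> fund_circuit M B e C -> e \notin B.
Proof. by move=> HB /andP [HC CeB]; case/andP: (circuit_subU1 HB HC CeB). Qed.

Lemma fund_circuit_exists B e : is_basis M B -> e \notin B ->
  exists C, fund_circuit M B e C.
Proof.
move=> HB eB.
pose P C := (C \subset e |: B) && ~~ indep M C.
have P0 : P (e |: B).
  by rewrite /P subxx; apply: contraNN eB; apply: basis_maximal.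
case: (arg_minnP (fun C : {set E} => #|C|) P0) => C /andP [CeB HC] Cmin.
exists C; rewrite /fund_circuit CeB andbT /circuit HC.
apply/forallP=> D; apply/implyP=> DC; apply/negPn/negP=> HD.
have := Cmin D; rewrite /P (subset_trans (proper_sub DC) CeB) HD => /(_ isT).
by rewrite leqNgt proper_card.
Qed.

Lemma basis_swap B C x y : is_basis M B -> circuit M C -> C \subset x |: B ->
  y \in C -> is_basis M ((x |: B) :\ y).
Proof.
move=> HB HC CxB yC.
have /andP [_ xB] := circuit_subU1 (basis_indep HB) HC CxB.
have CyxB : C :\ y \subset x |: B by apply: subset_trans CxB; apply: subsetDl.
have [J [HJ CyJ JxB Jmax]] :=
  indep_extend_maximum (circuit_proper_indep HC (properD1 yC)) CyxB.
have leBJ : #|B| <= #|J| by apply: Jmax; [apply: subsetUr | apply: basis_indep].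
have yJ : y \notin J.
  apply: (contraNN _ (circuit_dep HC)) => yJ; apply: indep_sub HJ.
  by rewrite -(setD1K yC) subUset sub1set yJ.
have -> : (x |: B) :\ y = J.
  apply/eqP; rewrite eq_sym eqEcard subsetD1 JxB yJ.
  by have := cardsD1 y (x |: B); rewrite (subsetP CxB _ yC) cardsU1 xB !add1n => -[<-].
exact: indep_basis_card HB HJ leBJ.
Qed.

Lemma fund_circuit_uniq B e C1 C2 : is_basis M B ->
  fund_circuit M B e C1 -> fund_circuit M B e C2 -> C1 = C2.
Proof.
move=> HB.
suff sub C C' : fund_circuit M B e C -> fund_circuit M B e C' -> C \subset C'.
  by move=> F1 F2; apply/eqP; rewrite eqEsubset !(sub _ _ F1 F2, sub _ _ F2 F1).
move=> /andP [HC CeB] /andP [HC' C'eB]; apply/subsetP=> x xC; apply/negPn/negP=> xC'.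
case/negP: (circuit_dep HC'); apply: indep_sub (basis_indep (basis_swap HB HC CeB xC)).
by rewrite subsetD1 C'eB xC'.
Qed.

Lemma rank_indep X : indep M X -> rank M X = #|X|.
Proof.
move=> HX; apply/eqP; rewrite eqn_leq; apply/andP; split.
  by apply/bigmax_leqP=> Y /andP [YX _]; apply: subset_leq_card.
by apply: (leq_bigmax_cond (F := fun Y : {set E} => #|Y|)); rewrite subxx HX.
Qed.

Lemma span_sub X : X \subset Defs.span M X.
Proof. by apply/subsetP=> x xX; rewrite inE (setUidPr _) ?sub1set. Qed.

Lemma notin_span_indep X g : indep M X -> g \notin Defs.span M X -> indep M (g |: X).
Proof.
move=> HX gs; have gX : g \notin X by apply: contra gs; apply/subsetP/span_sub.
move: gs; rewrite inE (rank_indep HX) => neq.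
have leX : #|X| <= rank M (g |: X).
  by apply: (leq_bigmax_cond (F := fun Y : {set E} => #|Y|)); rewrite subsetUr HX.
pose P Y := (Y \subset g |: X) && indep M Y.
have [Y /andP [YgX HY] rankE] : {Y | P Y & rank M (g |: X) = #|Y|}.
  by apply: eq_bigmax_cond; apply/card_gt0P; exists X; rewrite unfold_in /P subsetUr HX.
have -> : g |: X = Y.
  apply/eqP; rewrite eq_sym eqEcard YgX cardsU1 gX -rankE.
  by move: neq leX; rewrite eq_sym; lia.
exact: HY.
Qed.

Lemma indep_notin_span X g : indep M (g |: X) -> g \notin X -> g \notin Defs.span M X.
Proof.
move=> HgX gX; have HX : indep M X by apply: indep_sub HgX; apply: subsetUr.
by rewrite inE (rank_indep HgX) (rank_indep HX) cardsU1 gX add1n neq_ltn ltnSn orbT.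
Qed.

Lemma fund_circuit_mem_notin_span B C f g : is_basis M B -> f \in B ->
  g \notin Defs.span M (B :\ f) -> fund_circuit M B g C -> f \in C.
Proof.
move=> HB fB gs /andP [HC CgB]; apply: contraNT (circuit_dep HC) => fC.
have HBf : indep M (B :\ f) by apply: indep_sub (basis_indep HB); apply: subsetDl.
apply: indep_sub (notin_span_indep HBf gs).
apply/subsetP=> z zC; move: (subsetP CgB z zC); rewrite !in_setU1 in_setD1.
by case: (eqVneq z f) => [zf|]; [move: fC; rewrite -zf zC | ].
Qed.

Lemma circuit_cocircuit_exchange B C f : is_basis M B -> f \in B ->
  circuit M C -> f \in C -> exists2 g, g \in C :\ f & g \notin Defs.span M (B :\ f).
Proof.
move=> HB fB HC fC.
have HBf : indep M (B :\ f) by apply: indep_sub (basis_indep HB); apply: subsetDl.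
have [J [HJ CfJ JX Jmax]] := indep_extend_maximum (circuit_proper_indep HC (properD1 fC))
  (subsetUl (C :\ f) (B :\ f)).
have leBJ : #|B| <= #|J|.
  rewrite leqNgt; apply/negP=> ltJB.
  have [x /setDP [xB xJ] HxJ] := indep_exchange HJ (basis_indep HB) ltJB.
  have [xf | xf] := eqVneq x f.
    case/negP: (circuit_dep HC); apply: indep_sub HxJ.
    by rewrite -(setD1K fC) xf; apply: setUS.
  have xJX : x |: J \subset (C :\ f) :|: (B :\ f).
    by rewrite subUset sub1set JX in_setU !in_setD1 xf xB orbT.
  by have := Jmax _ xJX HxJ; rewrite cardsU1 xJ add1n ltnn.
have ltBfJ : #|B :\ f| < #|J| by move: leBJ; rewrite (cardsD1 f B) fB; lia.
have [g /setDP [gJ gBf] HgBf] := indep_exchange HBf HJ ltBfJ.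
exists g; last exact: indep_notin_span.
by move: (subsetP JX g gJ); rewrite in_setU (negbTE gBf) orbF.
Qed.

End MatroidFacts.

Section Weights.
Variables (R : realType) (E : finType) (M : matroid E).
Implicit Types (u : E -> R) (B C S X : {set E}) (e f g : E).
Local Open Scope ring_scope.

Lemma weight_setID u S X : S \subset X -> weight u X = weight u S + weight u (X :\: S).
Proof. by move=> SX; rewrite /weight (big_setID S) /= (setIidPr SX). Qed.

Lemma weight_swap u B f g : f \notin B -> g \in B ->
  weight u ((f |: B) :\ g) + u g = u f + weight u B.
Proof.
move=> fB gB; have gfB : g \in f |: B by rewrite in_setU1 gB orbT.
by rewrite /weight -(big_setU1 _ fB) /= (big_setD1 _ gfB) addrC.
Qed.

Lemma MWB_circuit_le u B C e f : is_MWB M u B -> circuit M C ->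
  C \subset e |: B -> f \in C -> u f <= u e.
Proof.
move=> [HB Bmin] HC CeB fC; have /andP [_ eB] := circuit_subU1 (basis_indep HB) HC CeB.
have [-> // | fe] := eqVneq f e.
have fB : f \in B by move: (subsetP CeB f fC); rewrite in_setU1 (negbTE fe).
have := Bmin _ (basis_swap HB HC CeB fC).
by rewrite -(lerD2r (u f)) (weight_swap u eB fB) [X in X <= _]addrC lerD2r.
Qed.

Lemma basis_superset_le_weight u Bh S : is_basis M Bh -> S \subset Bh ->
  (forall f g, f \in S -> g \notin Defs.span M (Bh :\ f) -> u f <= u g) ->
  forall B, is_basis M B ->
  exists B1, [/\ is_basis M B1, S \subset B1 & weight u B1 <= weight u B].
Proof.
move=> HBh SBh leS B HB.
pose P B1 := is_basis M B1 && (weight u B1 <= weight u B).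
have PB : P B by rewrite /P HB lexx.
case: (arg_minnP (fun B1 => #|S :\: B1|) PB) => B1 /andP [HB1 leB1] B1min.
exists B1; split=> //; apply/subsetP=> f fS; apply/negPn/negP=> fB1.
have [C FC] := fund_circuit_exists HB1 fB1; case/andP: (FC) => HC CfB1.
have fBh := subsetP SBh f fS.
have [g gCf gs] := circuit_cocircuit_exchange HBh fBh HC
  (fund_circuit_mem (basis_indep HB1) FC).
have /andP [gf gC] : (g != f) && (g \in C) by rewrite -in_setD1.
have gB1 : g \in B1 by move: (subsetP CfB1 g gC); rewrite in_setU1 (negbTE gf).
have gS : g \notin S.
  apply: contra gs => /(subsetP SBh) gBh; apply/(subsetP (span_sub _ _)).
  by rewrite in_setD1 gf.
pose B2 := (f |: B1) :\ g.
have HB2 : is_basis M B2 by apply: basis_swap HB1 HC CfB1 gC.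
have leB2 : weight u B2 <= weight u B.
  apply: le_trans leB1; rewrite -(lerD2r (u g)) (weight_swap u fB1 gB1) addrC.
  by rewrite lerD2l; apply: leS.
have ltS : (#|S :\: B2| < #|S :\: B1|)%N.
  apply: proper_card; apply/properP; split; last first.
    by exists f; rewrite /B2 !inE ?eqxx ?fS ?fB1 //= eq_sym gf.
  apply/subsetP=> x; rewrite !inE => /andP [xB2 xS]; rewrite xS andbT.
  by apply: contra xB2 => xB1; rewrite xB1 orbT andbT; apply: contraTneq xS => ->.
by have := B1min B2; rewrite /P HB2 leB2 => /(_ isT); rewrite leqNgt ltS.
Qed.

End Weights.

Section DoubleCharge.
Variables (T : finType) (U Q : {set T}).
Implicit Types D X : {set T}.

Lemma double_charge_setU D X : [disjoint D & X] ->
  #|D :\: U| <= 2 * #|Q :&: D| -> #|X :\: U| <= 2 * #|Q :&: X| ->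
  #|(D :|: X) :\: U| <= 2 * #|Q :&: (D :|: X)|.
Proof.
move=> dDX leD leX; rewrite setDUl setIUr.
have /eqP -> : #|(Q :&: D) :|: (Q :&: X)| == #|Q :&: D| + #|Q :&: X|.
  by rewrite (leq_card_setU _ _).2; apply: disjointW dDX; apply: subsetIr.
by apply: leq_trans (leq_card_setU _ _).1 _; lia.
Qed.

Lemma double_charge_small D : #|D| <= 2 -> D \subset U \/ Q :&: D != set0 ->
  #|D :\: U| <= 2 * #|Q :&: D|.
Proof.
move=> leD2 [DU | /set0Pn /card_gt0P QD].
  by move: DU; rewrite -setD_eq0 => /eqP ->; rewrite cards0.
by apply: leq_trans (subset_leq_card (subsetDl D U)) _; lia.
Qed.
End DoubleCharge.

Section Strategy.
Variables (R : realType) (E : finType) (M : matroid E) (A : E -> seq (interval R)).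
Variable Bh : {set E}.
Hypothesis HBh : is_basis M Bh.
Implicit Types (h : seq (E * R)) (w : E -> R) (B C S X : {set E}) (e f g x y z : E).
Local Open Scope ring_scope.

Definition hist_consistent h w' : Prop :=
  (forall e, in_area (A e) (w' e)) /\ (forall p, p \in h -> w' p.1 = p.2).

Definition hist_certificate h : Prop :=
  exists B, forall w', hist_consistent h w' -> is_MWB M w' B.

Definition fund_pair e f : Prop := exists2 C, fund_circuit M Bh e C & f \in C :\ e.

Definition conflicting h e f : Prop := exists2 w', hist_consistent h w' & w' e < w' f.

(* The revealed weights show that [f] is not lighter than its whole fundamental
   cocircuit, so every fundamental circuit through [f] is incorrect. *)
Definition refuted h f : Prop :=
  exists g vf vg,
    [/\ g \notin Defs.span M (Bh :\ f), (f, vf) \in h, (g, vg) \in h & vg < vf].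

Definition in_refuted_circuit h z : Prop :=
  z \notin queried h /\ exists e C,
    [/\ fund_circuit M Bh e C, z \in C & exists2 f, f \in C :\ e & refuted h f].

Definition conflict_partner h z : Prop :=
  z \notin queried h /\ exists e f, [/\ fund_pair e f, conflicting h e f &
    ((z == e) && (f \in queried h)) || ((z == f) && (e \in queried h))].

Definition open_conflict h e f : Prop :=
  [/\ e \notin queried h, f \notin queried h, fund_pair e f & conflicting h e f].

Definition next_queries h : option (E * option E) :=
  if [pick z | `[< in_refuted_circuit h z >]] is Some z then Some (z, None) else
  if [pick z | `[< conflict_partner h z >]] is Some z then Some (z, None) else
  if [pick p : E * E | `[< open_conflict h p.1 p.2 >]] is Some p
  then Some (p.1, Some p.2) else None.

(* Histories are stored oldest query first.  [pending h] is the partner still to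
   be queried when the last query of [h] opened an [open_conflict]; a pending
   query never makes another one pending. *)
Fixpoint pending_rev (rh : seq (E * R)) : option E :=
  if rh is p :: rh' then
    if pending_rev rh' is Some _ then None else
    if next_queries (rev rh') is Some (x, Some y) then
      if (x == p.1) && (y \notin queried (rev rh)) then Some y else None
    else None
  else None.

Definition pending h : option E := pending_rev (rev h).

Definition strategy h : option E :=
  if `[< hist_certificate h >] then None else
  if pending h is Some y then Some y else omap fst (next_queries h).

Lemma next_queries_None h : next_queries h = None ->
  [/\ forall z, ~ in_refuted_circuit h z, forall z, ~ conflict_partner h z &
      forall e f, ~ open_conflict h e f].
Proof.
rewrite /next_queries; case: pickP => [//|N1]; case: pickP => [//|N2].
case: pickP => [//|N3] _; split=> [z|z|e f] /asboolP;
  [by rewrite N1 | by rewrite N2 | by move: (N3 (e, f)) => /= ->].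
Qed.

Lemma next_queries_single h z : next_queries h = Some (z, None) ->
  in_refuted_circuit h z \/ conflict_partner h z.
Proof.
rewrite /next_queries; case: pickP => [z1 /asboolP ? [<-]|_]; first by left.
case: pickP => [z1 /asboolP ? [<-]|_]; first by right.
by case: pickP.
Qed.

Lemma next_queries_pair h x y : next_queries h = Some (x, Some y) -> open_conflict h x y.
Proof.
rewrite /next_queries; case: pickP => [//|_]; case: pickP => [//|_].
by case: pickP => [[a b] /asboolP /= ? [<- <-]|].
Qed.

Lemma queried_rcons h p : queried (rcons h p) = p.1 |: queried h.
Proof. by apply/setP=> x; rewrite !inE map_rcons mem_rcons in_cons. Qed.

Lemma pending_rcons h p : pending (rcons h p) =
  if pending h is Some _ then None else
  if next_queries h is Some (x, Some y) then
    if (x == p.1) && (y \notin queried (rcons h p)) then Some y else None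
  else None.
Proof. by rewrite /pending rev_rcons /= revK rev_cons revK. Qed.

Lemma pending_notin h y : pending h = Some y -> y \notin queried h.
Proof.
case/lastP: h => [//|h p]; rewrite pending_rcons.
case: (pending h) => //; case: (next_queries h) => [[x [y'|]]|] //.
by case: ifP => // /andP [_ ?] [<-].
Qed.

Lemma strategy_notin h z : strategy h = Some z -> z \notin queried h.
Proof.
rewrite /strategy; case: ifP => // _; case Ep: (pending h) => [y|].
  by case=> <-; apply: pending_notin.
case En: (next_queries h) => [[x [y|]]|] //= [<-].
  by case: (next_queries_pair En).
by case: (next_queries_single En) => [[]|[]].
Qed.

Lemma strategy_stops w : exists k, strategy (history strategy w k) = None.
Proof.
apply/not_existsP=> /= Hn.
suff cardE k : #|queried (history strategy w k)| = k.
  by have := max_card (mem (queried (history strategy w #|E|.+1))); rewrite cardE ltnn.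
elim: k => [|k IH] /=.
  by apply/eqP; rewrite cards_eq0; apply/eqP/setP=> x; rewrite !inE.
case Es: (strategy _) => [z|]; last by case: (Hn k).
by rewrite queried_rcons cardsU1 (strategy_notin Es) IH.
Qed.

Definition truthful w h : Prop := forall p, p \in h -> p.2 = w p.1.

Lemma history_truthful w k : truthful w (history strategy w k).
Proof.
elim: k => [//|k IH] /=; case: (strategy _) => [z|//] p.
by rewrite mem_rcons in_cons => /orP [/eqP -> //|]; apply: IH.
Qed.

Lemma hist_consistentE w h w' : truthful w h ->
  hist_consistent h w' <-> consistent A w (queried h) w'.
Proof.
move=> Hh; split=> -[Hw' Hh']; split=> //.
- by move=> e /[!inE] /mapP [p ph ->]; rewrite Hh' // Hh.
- by move=> p ph; rewrite (Hh p ph); apply: Hh'; rewrite inE; apply/mapP; exists p.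
Qed.

Lemma queried_mem h w' f : hist_consistent h w' -> f \in queried h -> (f, w' f) \in h.
Proof. by move=> [_ Hh] /[!inE] /mapP [p ph ->]; rewrite Hh //; case: p ph. Qed.

Definition unrefuted h : {set E} := [set f in Bh | ~~ `[< refuted h f >]].

Lemma unrefuted_le h w' : (forall z, ~ conflict_partner h z) ->
  (forall e f, ~ open_conflict h e f) -> hist_consistent h w' ->
  forall f g, f \in unrefuted h -> g \notin Defs.span M (Bh :\ f) -> w' f <= w' g.
Proof.
move=> N2 N3 Hw' f g; rewrite inE => /andP [fBh /asboolPn fnr] gs.
have [-> // | gf] := eqVneq g f.
have gBh : g \notin Bh.
  apply: contra gs => gBh; apply/(subsetP (span_sub _ _)); by rewrite in_setD1 gf.
have [C FC] := fund_circuit_exists HBh gBh.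
have fp : fund_pair g f.
  by exists C; rewrite // in_setD1 eq_sym gf (fund_circuit_mem_notin_span HBh fBh gs FC).
rewrite leNgt; apply/negP=> ltgf; have cf : conflicting h g f by exists w'.
case: (boolP (g \in queried h)) => gq; case: (boolP (f \in queried h)) => fq.
- by apply: fnr; exists g, (w' f), (w' g); split=> //; apply: queried_mem.
- by apply: (N2 f); split=> //; exists g, f; rewrite eqxx gq orbT.
- by apply: (N2 g); split=> //; exists g, f; rewrite eqxx fq.
- by apply: (N3 g f).
Qed.

Lemma basis_unrefuted_queried h B : (forall z, ~ in_refuted_circuit h z) ->
  is_basis M B -> unrefuted h \subset B -> B :\: unrefuted h \subset queried h.
Proof.
move=> N1 HB SB; apply/subsetP=> x /setDP [xB xS].
case: (boolP (x \in Bh)) => xBh.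
  move: xS; rewrite inE xBh negbK => /asboolP [g [vx [vg [_ xh _ _]]]].
  by rewrite inE; apply/mapP; exists (x, vx).
have [C FC] := fund_circuit_exists HBh xBh.
case: (boolP [exists f in C :\ x, `[< refuted h f >]]).
  case/exists_inP=> f fC /asboolP fr; apply/negPn/negP=> xq.
  apply: (N1 x); split=> //; exists x, C; split=> //; last by exists f.
  exact: fund_circuit_mem (basis_indep HBh) FC.
move/exists_inPn=> nr; case/andP: FC => HC CxB.
case/negP: (circuit_dep HC); apply: indep_sub (basis_indep HB).
apply/subsetP=> y yC; have [-> // | yx] := eqVneq y x.
apply: (subsetP SB); rewrite inE; move: (subsetP CxB y yC) (nr y).
by rewrite in_setU1 in_setD1 (negbTE yx) yC /= => -> /(_ isT).
Qed.

Lemma no_query_certificate w h : truthful w h -> next_queries h = None ->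
  hist_certificate h.
Proof.
move=> Hh /next_queries_None [N1 N2 N3]; set S := unrefuted h.
have SBh : S \subset Bh by apply/subsetP=> x /[!inE] /andP [].
pose P B := is_basis M B && (S \subset B).
have PBh : P Bh by rewrite /P HBh SBh.
case: (arg_minP (fun B => weight w B) PBh) => B0 /andP [HB0 SB0] B0min.
exists B0 => w' Hw'; split=> // B HB.
have [B1 [HB1 SB1 leB1]] :=
  basis_superset_le_weight HBh SBh (unrefuted_le N2 N3 Hw') HB.
apply: le_trans leB1.
have [_ w'E] := (hist_consistentE w' Hh).1 Hw'.
have wE X : X \subset queried h -> weight w' X = weight w X.
  by move=> Xq; apply: eq_bigr=> x xX; apply/w'E/(subsetP Xq).
rewrite (weight_setID _ SB0) (weight_setID _ SB1).
rewrite !(wE (_ :\: S)) ?basis_unrefuted_queried // lerD2l.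
by rewrite -(lerD2l (weight w S)) -!weight_setID //; apply: B0min; rewrite /P HB1.
Qed.

Lemma strategy_stop_certificate w h : truthful w h -> strategy h = None ->
  hist_certificate h.
Proof.
rewrite /strategy; case: asboolP => // _ Hh; case: (pending h) => //.
by case En: (next_queries h) => [//|] _; apply: no_query_certificate Hh En.
Qed.

Definition incorrect_circuits w : {set E} :=
  [set e | (e \notin Bh) && ~~ circ_correct M w Bh e].

Definition fund_circuit_set e : {set E} :=
  [set x | [exists C, fund_circuit M Bh e C && (x \in C)]].

Definition incorrect_elems w : {set E} :=
  \bigcup_(e in incorrect_circuits w) fund_circuit_set e.

Lemma card_fund_circuit_set e : (#|fund_circuit_set e| <= cmax M)%N.
Proof.
case: (boolP [exists C, fund_circuit M Bh e C]) => [/existsP [C FC] | /existsPn noC].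
  apply: (@leq_trans #|C|); last first.
    by apply: (leq_bigmax_cond (F := fun C : {set E} => #|C|)); case/andP: FC.
  apply/subset_leq_card/subsetP=> x /[!inE] /existsP [C' /andP [FC' xC']].
  by rewrite (fund_circuit_uniq HBh FC FC').
rewrite (_ : fund_circuit_set e = set0) ?cards0 //; apply/setP=> x; rewrite !inE.
by apply/existsP=> -[C /andP [FC _]]; move: (noC C); rewrite FC.
Qed.

Lemma card_incorrect_elems w : (#|incorrect_elems w| <= eta2 M w Bh * cmax M)%N.
Proof.
rewrite /incorrect_elems /eta2 -sum_nat_const.
elim/big_ind2: _ => [|n1 X1 n2 X2 le1 le2|e _]; first by rewrite cards0.
  exact: leq_trans (leq_card_setU X1 X2).1 (leq_add le1 le2).
exact: card_fund_circuit_set.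
Qed.

Lemma mem_incorrect_elems w e C x : ~~ circ_correct M w Bh e ->
  fund_circuit M Bh e C -> x \in C -> x \in incorrect_elems w.
Proof.
move=> nc FC xC; apply/bigcupP; exists e.
  by rewrite inE (fund_circuit_notin (basis_indep HBh) FC).
by rewrite inE; apply/existsP; exists C; rewrite FC.
Qed.

Lemma correct_fund_circuit_sub w e C : fund_circuit M Bh e C ->
  correct_circ M w Bh e C -> C :\ e \subset Bhat_s M w Bh.
Proof.
move=> FC cc; apply/subsetP=> x xCe; rewrite inE.
have /setD1P [xe xC] := xCe; case/andP: (FC) => _ CeBh.
move: (subsetP CeBh x xC); rewrite in_setU1 (negbTE xe) => /= ->.
apply/existsP; exists e; rewrite (fund_circuit_notin (basis_indep HBh) FC).
by apply/existsP; exists C; rewrite FC cc.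
Qed.

Lemma in_refuted_circuit_incorrect w h z : truthful w h ->
  in_refuted_circuit h z -> z \in incorrect_elems w.
Proof.
move=> Hh [_ [e [C [FC zC [f fCe [g [vf [vg [gs fh gh ltgf]]]]]]]]].
apply: (mem_incorrect_elems _ FC zC); apply/negP=> /existsP [C0 /andP [FC0 cc]].
rewrite (fund_circuit_uniq HBh FC0 FC) in cc.
case/andP: cc => _ /forall_inP /(_ f fCe) /forall_inP /(_ g); rewrite inE gs.
by rewrite -(Hh _ fh) -(Hh _ gh) leNgt ltgf => /(_ isT).
Qed.

Section Charging.
Variables (w : E -> R) (Bs Q' : {set E}).
Hypothesis Hw : forall e, in_area (A e) (w e).
Hypothesis BhsBs : Bhat_s M w Bh \subset Bs.
Hypothesis HQ' : verifies M A w Q' Bs.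

(* As [C :\ e] lies in [Bs], the conflict patched with [w] outside [e] and [f]
   is consistent with [Q'] unless one of them is an unqueried element of [Q'],
   and it makes [f] heavier than [e], so [Bs] would not be minimum. *)
Lemma correct_conflict_charged h e f : truthful w h -> fund_pair e f ->
  conflicting h e f -> circ_correct M w Bh e ->
  exists2 z, z \in [set e; f] & (z \notin queried h) && (z \in Q').
Proof.
move=> Hh [C FC fCe] [w'' Hw'' ltef] /existsP [C0 /andP [FC0 cc]].
rewrite (fund_circuit_uniq HBh FC0 FC) in cc.
case: (boolP [exists z in [set e; f], (z \notin queried h) && (z \in Q')]).
  by case/exists_inP=> z; exists z.
move/exists_inPn=> noz; exfalso.
pose w' x := if x \in [set e; f] then w'' x else w x.
have Hw' : consistent A w Q' w'.
  split=> [x|x xQ]; rewrite /w'; case: ifP => // ef; first by case: Hw''.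
  move: (noz x ef); rewrite xQ andbT negbK => xq.
  by have [_ ->] := (hist_consistentE w'' Hh).1 Hw''.
have CeBs : C \subset e |: Bs.
  rewrite -(setD1K (fund_circuit_mem (basis_indep HBh) FC)) setUS //.
  exact: subset_trans (correct_fund_circuit_sub FC cc) BhsBs.
have := MWB_circuit_le (HQ' Hw') (proj1 (andP FC)) CeBs (subsetP (subsetDl _ _) f fCe).
by rewrite /w' !inE !eqxx orbT leNgt ltef.
Qed.

Lemma conflict_charged h e f : truthful w h -> fund_pair e f -> conflicting h e f ->
  [set e; f] \subset incorrect_elems w \/
  exists2 z, z \in [set e; f] & (z \notin queried h) && (z \in Q').
Proof.
move=> Hh fp cf; case: (boolP (circ_correct M w Bh e)) => cc.
  by right; apply: correct_conflict_charged.
left; case: fp => C FC /setD1P [_ fC].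
have eC := fund_circuit_mem (basis_indep HBh) FC.
by rewrite subUset !sub1set !(mem_incorrect_elems cc FC).
Qed.

(* A pending element is charged together with its partner. *)
Definition committed h : {set E} := queried h :|: [set y | pending h == Some y].

Let U := incorrect_elems w.

Lemma single_query_charged h z : truthful w h ->
  in_refuted_circuit h z \/ conflict_partner h z ->
  (#|[set z] :\: U| <= 2 * #|Q' :&: [set z]|)%N.
Proof.
move=> Hh Hz; apply: double_charge_small; first by rewrite cards1.
case: Hz => [/(in_refuted_circuit_incorrect Hh) zU | [zq [e [f [fp cf ef]]]]].
  by left; rewrite sub1set.
case: (conflict_charged Hh fp cf) => [efU | [z' z'ef /andP [z'q z'Q]]].
  left; rewrite sub1set (subsetP efU) // !inE.
  by case/orP: ef => /andP [->]; rewrite ?orbT.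
right; apply/set0Pn; exists z'; rewrite !inE z'Q /=.
case/set2P: z'ef z'q => -> z'q; case/orP: ef => /andP [/eqP -> q]; rewrite ?eqxx //.
all: by rewrite q in z'q.
Qed.

Lemma pair_query_charged h x y : truthful w h -> open_conflict h x y ->
  (#|[set x; y] :\: U| <= 2 * #|Q' :&: [set x; y]|)%N.
Proof.
move=> Hh [_ _ fp cf]; apply: double_charge_small.
  by rewrite cards2; case: (x != y).
case: (conflict_charged Hh fp cf) => [|[z zxy /andP [_ zQ]]]; first by left.
by right; apply/set0Pn; exists z; rewrite inE zQ.
Qed.

Lemma committed_step h z : truthful w h -> strategy h = Some z ->
  exists D, [/\ committed (rcons h (z, w z)) = D :|: committed h,
    [disjoint D & committed h] & (#|D :\: U| <= 2 * #|Q' :&: D|)%N].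
Proof.
move=> Hh Hs; have zq := strategy_notin Hs; move: Hs.
rewrite /strategy; case: ifP => // _; rewrite /committed pending_rcons queried_rcons /=.
case Ep: (pending h) => [y|].
  case=> yz; subst y; exists set0.
  rewrite set0U disjoints_subset sub0set set0D setI0 cards0; split=> //.
  by apply/setP=> x; rewrite !inE /= orbF orbC eq_sym.
have -> : [set y : E | None == Some y] = set0 by apply/setP=> x; rewrite !inE.
rewrite setU0; case En: (next_queries h) => [[x [y|]]|] //= [xz]; subst x.
  have oc := next_queries_pair En; have [_ yq _ _] := oc.
  have yz : y != z by case: oc => _ _ [C _ /setD1P []].
  exists [set z; y]; split; last exact: pair_query_charged Hh oc.
  - rewrite eqxx in_setU1 (negbTE yz) (negbTE yq) /=.
    have -> : [set y0 | Some y == Some y0] = [set y].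
      by apply/setP=> x; rewrite !inE (inj_eq (@Some_inj _)) eq_sym.
    by rewrite setUAC.
  - by rewrite disjoints_subset subUset !sub1set !in_setC zq yq.
exists [set z]; split; last exact/(single_query_charged Hh)/next_queries_single.
- by rewrite setU0.
- by rewrite disjoints1.
Qed.

Lemma charging_invariant k : (#|committed (history strategy w k) :\: U| <=
  2 * #|Q' :&: committed (history strategy w k)|)%N.
Proof.
elim: k => [|k IH] /=.
  have -> : committed [::] = set0 by apply/setP=> x; rewrite !inE.
  by rewrite set0D cards0.
case Es: (strategy _) => [z|//].
have [D [-> dDc leD]] := committed_step (@history_truthful w k) Es.
exact: double_charge_setU.
Qed.

Lemma card_queried_history k :
  (#|queried (history strategy w k)| <= 2 * #|Q'| + eta2 M w Bh * cmax M)%N.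
Proof.
set h := history strategy w k; have := charging_invariant k.
rewrite -/h; set c := committed h => inv.
have qc : (#|queried h| <= #|c|)%N by apply/subset_leq_card/subsetUl.
have cQ : (#|Q' :&: c| <= #|Q'|)%N by apply/subset_leq_card/subsetIl.
have cU : (#|c :&: U| <= #|U|)%N by apply/subset_leq_card/subsetIr.
have := cardsID U c; have := card_incorrect_elems w; rewrite -/U; lia.
Qed.

End Charging.
End Strategy.

Unset Implicit Arguments.
Local Open Scope ring_scope.

Theorem theorem32 (R : realType) (E : finType) (M : matroid E)
    (A : E -> seq (interval R)) (Bh : {set E}) :
  (forall e, all (@bounded_itv R) (A e)) ->
  is_basis M Bh ->
  exists strat : seq (E * R) -> option E,
    forall w : E -> R, (forall e, in_area (A e) (w e)) ->
    exists k : nat,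
      let Q := queried (history strat w k) in
      [/\ strat (history strat w k) = None,
          certificate M A w Q,
          (#|Q| <= #|E|)%N &
          forall Qstar Bs Q', min_certificate M A w Qstar ->
            opt_Bs_cert M A w Bh Bs Q' ->
            (#|Q| <= 2 * (#|Qstar| + eta1 Qstar Q') + eta2 M w Bh * cmax M)%N].
Proof.
(* The strategy never relies on the boundedness of the areas. *)
move=> _ HBh; exists (strategy M A Bh) => w Hw.
have [k stop] := strategy_stops M A Bh w; exists k => /=.
have Hh : truthful w (history (strategy M A Bh) w k) by apply: history_truthful.
split=> //.
- have [B HB] := strategy_stop_certificate HBh Hh stop.
  by exists B => w' /(hist_consistentE A w' Hh); apply: HB.
- exact: max_card.
move=> Qstar Bs Q' [_ Qmin] [_ BhsBs HQ' _ _].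
have := card_queried_history HBh Hw BhsBs HQ' k.
have : (#|Qstar| <= #|Q'|)%N by apply: Qmin; exists Bs.
rewrite /eta1; lia.
Qed.
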